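(* Let $P\subset\mathbb{R}^d$ be a simple $d$-polytope, let $H^+$ be a closed halfspace whose bounding hyperplane $\overline{H}$ contains no vertex of $P$ and meets the interior of $P$, and let $P'=P\cap H^+$. Call a face of $P'$ new if it is contained in $\overline{H}$; for a new face $f'$ of $P'$, its parent face is the face $f$ of $P$ with $f'=\overline{H}\cap f$ (so a new $k$-face has a parent $(k+1)$-face). Let $0\le k\le d-2$ and let $u',v'$ be new $k$-faces of $P'$ with parent $(k+1)$-faces $u,v$ of $P$. Then $u'$ and $v'$ lie on a common $(k+1)$-face of $P'$ if and only if $u$ and $v$ lie on a common $(k+2)$-face of $P$.
   Context: A $d$-polytope is simple if every vertex lies in exactly $d$ facets. A $k$-face is a face of dimension $k$; faces of a polytope are $\emptyset$, the polytope itself, and intersections of the polytope with supporting hyperplanes. *)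

From HB Require Import structures.
From mathcomp Require Import all_boot all_order all_algebra.
From mathcomp Require Import boolp classical_sets reals.
From mathcomp.analysis Require Import topology_theory.topology normedtype_theory.normedtype.
Import numFieldTopology.Exports numFieldNormedType.Exports.
Set Implicit Arguments. Unset Strict Implicit. Unset Printing Implicit Defensive.
Import Order.TTheory GRing.Theory Num.Theory.
Local Open Scope ring_scope.
Local Open Scope classical_set_scope.

Section Polytopes.
Variables (R : realType) (d : nat).
Local Notation pt := 'rV[R]_d.

Definition dotp (a x : pt) : R := \sum_(i < d) a ord0 i * x ord0 i.

Definition conv (V : seq pt) : set pt :=
  [set x | exists w : 'I_(size V) -> R,
     [/\ forall i, 0 <= w i, \sum_i w i = 1 & x = \sum_i w i *: V`_(val i)]].

Definition polytope (P : set pt) : Prop := exists V : seq pt, P = conv V.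

(* affine independence of n points: lifted points (p_i, 1) are linearly independent *)
Definition affindep n (p : 'I_n -> pt) : bool :=
  row_free (\matrix_(i < n) row_mx (p i) (1 : 'rV[R]_1)).

Definition affdim (S : set pt) (k : nat) : Prop :=
  (exists p : 'I_k.+1 -> pt, (forall i, S (p i)) /\ affindep p) /\
  (forall p : 'I_k.+2 -> pt, (forall i, S (p i)) -> ~~ affindep p).

Definition face (P F : set pt) : Prop :=
  F = set0 \/ F = P \/
  exists (c : pt) (b : R), c != 0 /\ (forall x, P x -> dotp c x <= b) /\
    F = P `&` [set x | dotp c x = b].

Definition kface (P : set pt) (k : nat) (F : set pt) : Prop :=
  face P F /\ affdim F k.

Definition dpolytope (P : set pt) : Prop := polytope P /\ affdim P d.

Definition simple_polytope (P : set pt) : Prop :=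
  dpolytope P /\
  forall v, kface P 0 v ->
    exists Fs : 'I_d -> set pt,
      injective Fs /\ (forall i, kface P d.-1 (Fs i) /\ v `<=` Fs i) /\
      (forall F, kface P d.-1 F -> v `<=` F -> exists i, F = Fs i).

Definition hyperplane (a : pt) (b : R) : set pt := [set x | dotp a x = b].
Definition halfspace (a : pt) (b : R) : set pt := [set x | b <= dotp a x].

End Polytopes.

(* Since H contains no vertex and every nonempty face contains a vertex, a face
   F of P meeting H has points strictly on both sides of H, so F `&` H has
   exactly one dimension less than F.  Conversely, a face G' of P' restricted
   to H is the trace of a face G of P (a Farkas-type lifting of the inequality
   of G'), and a face of P meeting H lies in every face containing its trace
   on H.  Hence if u' and v' lie on a (k+1)-face G' of P', then u and v lie on
   the lift G, of dimension at most k+2, which extends to a (k+2)-face because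
   the face lattice of P has no gaps in dimension.  Conversely, F `&` H is the
   required (k+1)-face of P' for a (k+2)-face F of P through u and v. *)

From HB Require Import structures.
From mathcomp Require Import all_boot all_order all_algebra.
From mathcomp Require Import boolp classical_sets reals.
From mathcomp.analysis Require Import topology_theory.topology normedtype_theory.normedtype.
Import numFieldTopology.Exports numFieldNormedType.Exports.
Import Order.TTheory GRing.Theory Num.Theory.
Local Open Scope ring_scope.
Local Open Scope classical_set_scope.
Set Implicit Arguments. Unset Strict Implicit. Unset Printing Implicit Defensive.
From mathcomp Require Import ring lra.


Section RowSpaces.
Variable F : fieldType.

Lemma row_free_col_mx m n (A : 'M[F]_(m, n)) (v : 'rV[F]_n) :
  row_free A -> ~~ (v <= A)%MS -> row_free (col_mx A v).
Proof.
move=> freeA vNA; apply: inj_row_free => z; rewrite -[z]hsubmxK mul_row_col => z0.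
have zr0 : rsubmx z = 0.
  apply/eqP/negPn/negP => nz.
  have s0 : rsubmx z 0 0 != 0.
    by apply: contra nz => /eqP e; rewrite [rsubmx z]mx11_scalar e; apply/eqP/matrixP=> i j; rewrite !ord1 !mxE.
  move: vNA; rewrite -[v]scale1r -(mulVf s0) -scalerA.
  have -> : rsubmx z 0 0 *: v = - (lsubmx z *m A).
    by rewrite -mul_scalar_mx -mx11_scalar; apply/eqP; rewrite -addr_eq0 addrC z0.
  by move/negP; apply; rewrite scalemx_sub // eqmx_opp submxMl.
move: z0; rewrite zr0 mul0mx addr0 => /eqP; rewrite mulmx_free_eq0 // => /eqP ->.
by rewrite row_mx0.
Qed.

Lemma row_free_leq m1 m2 n (A : 'M[F]_(m1, n)) (B : 'M[F]_(m2, n)) :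
  row_free A -> (A <= B)%MS -> (m1 <= m2)%N.
Proof.
by move=> /eqP freeA /mxrankS; rewrite freeA => /leq_trans; apply; exact: rank_leq_row.
Qed.

Lemma submx_comb m n (A : 'M[F]_(m, n)) (v u z : 'rV[F]_n) (al be : F) :
  (z <= A)%MS -> (u <= A)%MS -> z = al *: v + be *: u -> al != 0 -> (v <= A)%MS.
Proof.
move=> zA uA ez al0.
have -> : v = al^-1 *: (z + (- be) *: u) by rewrite ez scaleNr addrK scalerA mulVf ?scale1r.
by rewrite scalemx_sub // addmx_sub // scalemx_sub.
Qed.

Lemma submx_mulmx0 m n p (A : 'M[F]_(m, n)) (v : 'rV[F]_n) (w : 'M[F]_(n, p)) :
  (v <= A)%MS -> A *m w = 0 -> v *m w = 0.
Proof. by move=> /(submxMr w) + Aw0; rewrite Aw0 => /submx0null. Qed.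

End RowSpaces.

Section Homogeneous.
Variables (R : realType) (d : nat).
Local Notation pt := 'rV[R]_d.

Lemma dotpE (c x : pt) : dotp c x = (x *m c^T) 0 0.
Proof. by rewrite /dotp !mxE; apply: eq_bigr => i _; rewrite !mxE mulrC. Qed.

Lemma dotpDr (c x y : pt) : dotp c (x + y) = dotp c x + dotp c y.
Proof. by rewrite !dotpE mulmxDl mxE. Qed.

Lemma dotpZr (c x : pt) s : dotp c (s *: x) = s * dotp c x.
Proof. by rewrite !dotpE -scalemxAl mxE. Qed.

Lemma dotp_sumr n (c : pt) (w : 'I_n -> R) (p : 'I_n -> pt) :
  dotp c (\sum_i w i *: p i) = \sum_i w i * dotp c (p i).
Proof.
by rewrite dotpE mulmx_suml summxE; apply: eq_bigr => i _; rewrite -scalemxAl mxE dotpE.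
Qed.

Lemma dotpDl (c e x : pt) : dotp (c + e) x = dotp c x + dotp e x.
Proof. by rewrite /dotp -big_split; apply: eq_bigr => i _; rewrite !mxE mulrDl. Qed.

Lemma dotpNl (c x : pt) : dotp (- c) x = - dotp c x.
Proof. by rewrite /dotp -sumrN; apply: eq_bigr => i _; rewrite !mxE mulNr. Qed.

Lemma dotpBl (c e x : pt) : dotp (c - e) x = dotp c x - dotp e x.
Proof. by rewrite dotpDl dotpNl. Qed.

Lemma dotpZl (c x : pt) s : dotp (s *: c) x = s * dotp c x.
Proof. by rewrite /dotp mulr_sumr; apply: eq_bigr => i _; rewrite !mxE mulrA. Qed.

Lemma dotp0l (x : pt) : dotp 0 x = 0.
Proof. by rewrite /dotp big1 // => i _; rewrite mxE mul0r. Qed.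

Lemma dotpBr (c x y : pt) : dotp c (x - y) = dotp c x - dotp c y.
Proof. by rewrite dotpDr -scaleN1r dotpZr mulN1r. Qed.

Lemma dotpp_gt0 (c : pt) : c != 0 -> 0 < dotp c c.
Proof.
move=> c0; rewrite lt_neqAle sumr_ge0 ?andbT => [|i _]; last exact: sqr_ge0.
apply: contra c0 => /eqP e; apply/eqP/rowP => j; rewrite mxE.
have := @psumr_eq0P _ _ _ (fun i => c 0 i * c 0 i) (fun i _ => sqr_ge0 (c 0 i)) (esym e) j isT.
by move/eqP; rewrite mulf_eq0 orbb => /eqP.
Qed.

(* Points are embedded as [x 1], so that affine independence of points becomes
   linear independence of rows and affine functionals become linear forms. *)
Definition homog (x : pt) : 'rV[R]_(d + 1) := row_mx x 1.

Definition homog_mx n (p : 'I_n -> pt) : 'M[R]_(n, d + 1) := \matrix_i homog (p i).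

Lemma affindepE n (p : 'I_n -> pt) : affindep p = row_free (homog_mx p).
Proof. by []. Qed.

Lemma row_homog_mx n (p : 'I_n -> pt) i : row i (homog_mx p) = homog (p i).
Proof. exact: rowK. Qed.

Lemma homog_comb (x y : pt) s :
  homog (s *: x + (1 - s) *: y) = s *: homog x + (1 - s) *: homog y.
Proof.
by rewrite /homog !scale_row_mx add_row_mx -scalerDl subrKC scale1r.
Qed.

Lemma homog_mulmx (x : pt) (w : 'cV[R]_(d + 1)) :
  homog x *m w = (dotp (usubmx w)^T x + dsubmx w 0 0)%:M.
Proof.
rewrite -[w in LHS]vsubmxK /homog mul_row_col dotpE trmxK {1}[dsubmx w]mx11_scalar mul1mx.
by apply/matrixP => i j; rewrite !ord1 !mxE /= !mulr1n.
Qed.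

Definition hyperplane_col (c : pt) (beta : R) : 'cV[R]_(d + 1) := col_mx c^T (- beta)%:M.

Lemma homog_hyperplane_col (x c : pt) beta :
  homog x *m hyperplane_col c beta = (dotp c x - beta)%:M.
Proof. by rewrite homog_mulmx col_mxKu col_mxKd trmxK mxE /= mulr1n. Qed.

Lemma homog_mx_hyperplane n (p : 'I_n -> pt) c beta :
  (forall i, dotp c (p i) = beta) -> homog_mx p *m hyperplane_col c beta = 0.
Proof.
move=> pc; apply/row_matrixP => i.
rewrite row_mul row_homog_mx homog_hyperplane_col pc subrr row0.
by apply/matrixP => ? ?; rewrite !mxE mul0rn.
Qed.

Definition rcons_pt n (p : 'I_n -> pt) (y : pt) : 'I_(n + 1) -> pt :=
  fun i => if split i is inl j then p j else y.

Lemma homog_mx_rcons n (p : 'I_n -> pt) y :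
  homog_mx (rcons_pt p y) = col_mx (homog_mx p) (homog y).
Proof.
apply/matrixP => i j; rewrite /homog_mx /rcons_pt mxE.
case: splitP => k ek.
  have -> : i = lshift 1 k by apply: val_inj.
  by rewrite col_mxEu mxE.
have -> : i = rshift n k by apply: val_inj.
by rewrite col_mxEd !ord1.
Qed.

Lemma rcons_pt_in (S : set pt) n (p : 'I_n -> pt) y :
  (forall i, S (p i)) -> S y -> forall i, S (rcons_pt p y i).
Proof. by move=> Sp Sy i; rewrite /rcons_pt; case: split. Qed.

Lemma homog_mx_rcons_free n (p : 'I_n -> pt) y :
  row_free (homog_mx p) -> ~~ (homog y <= homog_mx p)%MS ->
  row_free (homog_mx (rcons_pt p y)).
Proof. by rewrite homog_mx_rcons; exact: row_free_col_mx. Qed.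

Lemma homog_mx_rconsS n (p : 'I_n -> pt) y : (homog_mx p <= homog_mx (rcons_pt p y))%MS.
Proof. by rewrite homog_mx_rcons -addsmxE addsmxSl. Qed.

Lemma homog_rcons_sub n (p : 'I_n -> pt) y : (homog y <= homog_mx (rcons_pt p y))%MS.
Proof. by rewrite homog_mx_rcons -addsmxE addsmxSr. Qed.

End Homogeneous.

Section AffineRank.
Variables (R : realType) (d : nat).
Local Notation pt := 'rV[R]_d.

Definition has_affindep (S : set pt) (n : nat) : bool :=
  `[< exists p : 'I_n -> pt, (forall i, S (p i)) /\ row_free (homog_mx p) >].

Lemma has_affindep0 S : exists n, has_affindep S n.
Proof.
exists 0%N; apply/asboolP; exists (fun _ => 0); split => [[]//|].
by rewrite /row_free -leqn0 rank_leq_row.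
Qed.

Lemma has_affindep_leq S n : has_affindep S n -> (n <= d + 1)%N.
Proof. by move/asboolP => [p [_ /eqP <-]]; exact: rank_leq_col. Qed.

(* Affine dimension plus one; [0] for the empty set. *)
Definition aff_rank (S : set pt) : nat := ex_maxn (has_affindep0 S) (@has_affindep_leq S).

Lemma aff_rank_basis S :
  exists p : 'I_(aff_rank S) -> pt, (forall i, S (p i)) /\ row_free (homog_mx p).
Proof. by rewrite /aff_rank; case: ex_maxnP => i /asboolP. Qed.

Lemma affindep_leq_aff_rank S n (p : 'I_n -> pt) :
  (forall i, S (p i)) -> row_free (homog_mx p) -> (n <= aff_rank S)%N.
Proof.
by move=> Sp fp; rewrite /aff_rank; case: ex_maxnP => i _; apply; apply/asboolP; exists p.
Qed.

Lemma aff_rank_span S (p : 'I_(aff_rank S) -> pt) :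
  (forall i, S (p i)) -> row_free (homog_mx p) ->
  forall x, S x -> (homog x <= homog_mx p)%MS.
Proof.
move=> Sp fp x Sx; apply: contraT => xNp.
have := affindep_leq_aff_rank (rcons_pt_in Sp Sx) (homog_mx_rcons_free fp xNp).
by rewrite addn1 ltnn.
Qed.

Lemma aff_rank_leq_span S n (q : 'I_n -> pt) :
  (forall x, S x -> (homog x <= homog_mx q)%MS) -> (aff_rank S <= n)%N.
Proof.
move=> Sq; have [p [Sp fp]] := aff_rank_basis S; apply: row_free_leq fp _.
by apply/row_subP => i; rewrite row_homog_mx; apply: Sq.
Qed.

Lemma aff_rankS (S T : set pt) : S `<=` T -> (aff_rank S <= aff_rank T)%N.
Proof.
move=> ST; have [p [Sp fp]] := aff_rank_basis S.
by apply: (affindep_leq_aff_rank (p := p)) => // i; apply: ST.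
Qed.

Lemma aff_rank_ltr_hyperplane (S T : set pt) c beta y :
  S `<=` T -> (forall x, S x -> dotp c x = beta) -> T y -> dotp c y != beta ->
  (aff_rank S < aff_rank T)%N.
Proof.
move=> ST Sc Ty cy; have [p [Sp fp]] := aff_rank_basis S.
have yNp : ~~ (homog y <= homog_mx p)%MS.
  apply/negP => /submx_mulmx0 /(_ (homog_mx_hyperplane (fun i => Sc _ (Sp i)))).
  rewrite homog_hyperplane_col => /matrixP /(_ 0 0); rewrite !mxE /= mulr1n.
  by move/eqP; rewrite subr_eq0 (negbTE cy).
have := affindep_leq_aff_rank (rcons_pt_in (fun i => ST _ (Sp i)) Ty).
by move/(_ (homog_mx_rcons_free fp yNp)); rewrite addn1.
Qed.

Lemma aff_rank_gt0 (S : set pt) x : S x -> (0 < aff_rank S)%N.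
Proof.
move=> Sx; apply: (affindep_leq_aff_rank (p := fun _ : 'I_1 => x)) => //.
apply: inj_row_free => z /matrixP /(_ 0 (rshift d 0)).
rewrite !mxE big_ord1 !mxE /= -[rshift d 0]/(unsplit (inr 0)) unsplitK mxE eqxx mulr1 => z0.
by apply/matrixP => i j; rewrite !ord1 z0 mxE.
Qed.

Lemma aff_rank_gt0_inhabited (S : set pt) : (0 < aff_rank S)%N -> exists x, S x.
Proof. by move=> S0; have [p [Sp _]] := aff_rank_basis S; exists (p (Ordinal S0)). Qed.

Lemma aff_rank_gt1_other (S : set pt) x :
  S x -> (1 < aff_rank S)%N -> exists y, S y /\ y != x.
Proof.
move=> Sx S1; apply: contrapT => noy; move: S1; apply/negP; rewrite -leqNgt.
apply: (aff_rank_leq_span (q := fun _ : 'I_1 => x)) => y Sy.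
have -> : y = x by apply: contrapT => yx; apply: noy; exists y; split => //; exact/eqP.
by rewrite -(row_homog_mx (fun _ : 'I_1 => x) 0) row_sub.
Qed.

Lemma homog_mx_cast_free m n (e : m = n) (p : 'I_m -> pt) :
  row_free (homog_mx p) -> row_free (homog_mx (fun i => p (cast_ord (esym e) i))).
Proof.
by case: n / e; congr (is_true (row_free (homog_mx _))); apply: funext => i; rewrite cast_ord_id.
Qed.

Lemma affdimE (S : set pt) k : affdim S k <-> aff_rank S = k.+1.
Proof.
split => [[[q [Sq fq]] noindep]|Sk].
  apply/eqP; rewrite eqn_leq (affindep_leq_aff_rank Sq fq) andbT.
  apply: (aff_rank_leq_span (q := q)) => x Sx; apply: contraT => xNq.
  have /(homog_mx_cast_free (addn1 k.+1)) := homog_mx_rcons_free fq xNq.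
  have := noindep _ (fun i => rcons_pt_in Sq Sx (cast_ord (esym (addn1 k.+1)) i)).
  by rewrite affindepE => /negbTE ->.
split; first by have [p [Sp fp]] := aff_rank_basis S; rewrite Sk in p Sp fp *; exists p.
by move=> p Sp; apply/negP => fp; have := affindep_leq_aff_rank Sp fp; rewrite Sk ltnn.
Qed.

End AffineRank.

Lemma exists_argmax (R : realType) (I : finType) (Pr : pred I) (f : I -> R) :
  (exists i, Pr i) -> exists i, Pr i /\ forall j, Pr j -> f j <= f i.
Proof.
move=> [i0 Pi0]; case: (@arg_maxP _ _ I i0 Pr f Pi0) => i Pi imax.
by exists i; split => // j /imax.
Qed.

Lemma exists_argmin (R : realType) (I : finType) (Pr : pred I) (f : I -> R) :
  (exists i, Pr i) -> exists i, Pr i /\ forall j, Pr j -> f i <= f j.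
Proof.
move=> /(exists_argmax (fun i => - f i)) [i [Pi imax]].
by exists i; split => // j /imax; rewrite lerN2.
Qed.

Lemma exists_dominating_scale (R : realType) (I : finType) (f e : I -> R) :
  exists s, forall i, f i < 0 -> s * f i + e i < 0.
Proof.
pose r i := if f i < 0 then `|e i| / - f i else 0.
have r0 i : 0 <= r i.
  by rewrite /r; case: ifP => // fi0; rewrite divr_ge0 // oppr_ge0 ltW.
exists (1 + \sum_i r i) => i fi0.
have ri : r i <= \sum_j r j by rewrite (bigD1 i) //= lerDl sumr_ge0.
have : `|e i| <= r i * - f i by rewrite /r fi0 divfK ?oppr_eq0 ?lt_eqF.
have nf0 : 0 <= - f i by rewrite oppr_ge0 ltW.
have := ler_norm (e i); have := ler_wpM2r nf0 ri.
nra.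
Qed.

Section Faces.
Variables (R : realType) (d : nat).
Local Notation pt := 'rV[R]_d.

(* Faces cut out by a valid inequality whose normal may vanish; this covers
   the empty face and [P] itself uniformly. *)
Definition ineq_face (P F : set pt) : Prop :=
  exists (c : pt) (b : R), (forall x, P x -> dotp c x <= b) /\
    F = P `&` [set x | dotp c x = b].

Lemma faceP (P F : set pt) : face P F <-> ineq_face P F.
Proof.
split.
  case=> [->|[->|[c [b [_ [cP ->]]]]]]; last by exists c, b.
    exists 0, 1; split => [x _|]; first by rewrite dotp0l ler01.
    by apply/seteqP; split => x //= [_]; rewrite dotp0l => /eqP; rewrite eq_sym oner_eq0.
  exists 0, 0; split => [x _|]; first by rewrite dotp0l.
  by apply/seteqP; split => x; [move=> Px; split => //; rewrite /= dotp0l | case].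
move=> [c [b [cP ->]]]; have [->|c0] := eqVneq c 0; last by right; right; exists c, b.
have [->|b0] := eqVneq b 0.
  right; left; apply/seteqP; split => x /=; first by case.
  by move=> Px; split => //; rewrite dotp0l.
left; apply/seteqP; split => x //= [_]; rewrite dotp0l => e.
by move: b0; rewrite -e eqxx.
Qed.

Definition is_convex (S : set pt) := forall x y s, S x -> S y -> 0 <= s -> s <= 1 ->
  S (s *: x + (1 - s) *: y).

Lemma ineq_face_convex P F : is_convex P -> ineq_face P F -> is_convex F.
Proof.
move=> cvxP [c [b [_ ->]]] x y s [Px cx] [Py cy] s0 s1; split; first exact: cvxP.
by rewrite /= dotpDr !dotpZr cx cy -mulrDl subrKC mul1r.
Qed.

Lemma ineq_face_sub P F : ineq_face P F -> F `<=` P.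
Proof. by move=> [c [b [_ ->]]] x []. Qed.

Lemma ineq_face_refl P : ineq_face P P.
Proof.
exists 0, 0; split => [x _|]; first by rewrite dotp0l.
by apply/seteqP; split => x; [move=> Px; split => //; rewrite /= dotp0l | case].
Qed.

Variable V : seq pt.
Local Notation n := (size V).
Local Notation vt i := (V`_(val i)).
Local Notation P := (conv V).

Lemma conv_vt (i : 'I_n) : P (vt i).
Proof.
exists (fun j => (j == i)%:R); split.
- by move=> j; rewrite ler0n.
- by rewrite (bigD1 i) //= eqxx big1 ?addr0 // => j /negbTE ->.
- rewrite (bigD1 i) //= eqxx scale1r big1 ?addr0 // => j /negbTE ->.
  by rewrite scale0r.
Qed.

Lemma conv_convex : is_convex P.
Proof.
move=> x y s [w [w0 w1 ->]] [w' [w0' w1' ->]] s0 s1.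
exists (fun i => s * w i + (1 - s) * w' i); split.
- by move=> i; rewrite addr_ge0 // mulr_ge0 // subr_ge0.
- by rewrite big_split /= -!mulr_sumr w1 w1' !mulr1 subrKC.
- by rewrite !scaler_sumr -big_split /=; apply: eq_bigr => i _; rewrite !scalerA scalerDl.
Qed.

Section ConvexCombination.
Variables (w : 'I_n -> R) (c : pt) (b : R).
Hypotheses (w_ge0 : forall i, 0 <= w i) (w_sum1 : \sum_i w i = 1).

Lemma dotp_comb_subr :
  dotp c (\sum_i w i *: vt i) - b = \sum_i w i * (dotp c (vt i) - b).
Proof.
rewrite dotp_sumr (eq_bigr _ (fun i _ => mulrBr (w i) _ b)) sumrB.
by rewrite -mulr_suml w_sum1 mul1r.
Qed.

Hypothesis active_le : forall i, w i != 0 -> dotp c (vt i) <= b.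

Lemma dotp_comb_le : dotp c (\sum_i w i *: vt i) <= b.
Proof.
rewrite -subr_le0 dotp_comb_subr sumr_le0 // => i _.
have [->|wi] := eqVneq (w i) 0; first by rewrite mul0r.
by rewrite mulr_ge0_le0 // subr_le0 active_le.
Qed.

Lemma dotp_comb_eq_active :
  dotp c (\sum_i w i *: vt i) = b -> forall i, w i != 0 -> dotp c (vt i) = b.
Proof.
move/eqP; rewrite -subr_eq0 dotp_comb_subr -oppr_eq0 -sumrN => /eqP sum0 i wi.
have term_ge0 j : true -> 0 <= - (w j * (dotp c (vt j) - b)).
  move=> _; have [->|wj] := eqVneq (w j) 0; first by rewrite mul0r oppr0.
  by rewrite oppr_ge0 mulr_ge0_le0 // subr_le0 active_le.
move: (@psumr_eq0P _ _ _ _ term_ge0 sum0 i isT) => /eqP.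
by rewrite oppr_eq0 mulf_eq0 (negbTE wi) subr_eq0 => /eqP.
Qed.

End ConvexCombination.

Lemma dotp_comb_eq (w : 'I_n -> R) c b :
  \sum_i w i = 1 -> (forall i, w i != 0 -> dotp c (vt i) = b) ->
  dotp c (\sum_i w i *: vt i) = b.
Proof.
move=> w1 active_eq; apply/eqP; rewrite -subr_eq0 dotp_comb_subr // big1 // => i _.
by have [->|wi] := eqVneq (w i) 0; rewrite ?mul0r // active_eq // subrr mulr0.
Qed.

Lemma ineq_face_active F x (w : 'I_n -> R) :
  ineq_face P F -> F x -> (forall i, 0 <= w i) -> \sum_i w i = 1 ->
  x = \sum_i w i *: vt i -> forall i, w i != 0 -> F (vt i).
Proof.
move=> [c [b [cP ->]]] [Px cx] w0 w1 ex i wi; split; first exact: conv_vt.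
apply: (dotp_comb_eq_active w0 w1) => [j _||//]; first exact/cP/conv_vt.
by rewrite -ex.
Qed.

Lemma ineq_face_vt F x : ineq_face P F -> F x -> exists i : 'I_n, F (vt i).
Proof.
move=> gF Fx; have [w [w0 w1 ex]] := ineq_face_sub gF Fx.
have [i wi] : exists i, w i != 0.
  apply: contrapT => w_eq0; move: w1; rewrite big1 => [/eqP|i _].
    by rewrite eq_sym oner_eq0.
  by apply: contrapT => wi; apply: w_eq0; exists i; apply/eqP.
by exists i; exact: ineq_face_active gF Fx w0 w1 ex i wi.
Qed.

Lemma ineq_face_le F psi kap :
  ineq_face P F -> (forall i : 'I_n, F (vt i) -> dotp psi (vt i) <= kap) ->
  forall x, F x -> dotp psi x <= kap.
Proof.
move=> gF Fvt_le x Fx; have [w [w0 w1 ex]] := ineq_face_sub gF Fx.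
rewrite ex; apply: dotp_comb_le => // i wi; apply: Fvt_le.
exact: ineq_face_active gF Fx w0 w1 ex i wi.
Qed.

(* A face of a face is a face: tilt the inequality of [T] by a large multiple
   of the one cutting the subface, so that vertices outside [T] stay strict. *)
Lemma ineq_face_trans T psi kap :
  ineq_face P T -> (forall x, T x -> dotp psi x <= kap) ->
  ineq_face P (T `&` [set x | dotp psi x = kap]).
Proof.
move=> gT psiT; case: (gT) => g [gam [gP eT]].
have [s s_strict] := exists_dominating_scale (fun i : 'I_n => dotp g (vt i) - gam)
  (fun i => dotp psi (vt i) - kap).
have phiE x : dotp (s *: g + psi) x - (s * gam + kap) =
    s * (dotp g x - gam) + (dotp psi x - kap) by rewrite dotpDl dotpZl; ring.
have outside_lt (i : 'I_n) : ~ T (vt i) -> dotp (s *: g + psi) (vt i) < s * gam + kap.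
  move=> Ti; have gi : dotp g (vt i) < gam.
    rewrite lt_neqAle gP ?andbT; last exact: conv_vt.
    by apply: contra_notN Ti => /eqP gi; rewrite eT; split => //; exact: conv_vt.
  by rewrite -subr_lt0 phiE s_strict // subr_lt0.
have vt_le (i : 'I_n) : dotp (s *: g + psi) (vt i) <= s * gam + kap.
  have [Ti|/outside_lt/ltW //] := pselect (T (vt i)).
  rewrite -subr_le0 phiE; move: (Ti); rewrite eT => -[_ ->].
  by rewrite subrr mulr0 add0r subr_le0 psiT.
exists (s *: g + psi), (s * gam + kap); split.
  by move=> x [w [w0 w1 ->]]; exact: dotp_comb_le.
apply/seteqP; split => x.
  move=> [Tx psix]; move: (Tx); rewrite eT => -[Px gx]; split => //.
  by apply/eqP; rewrite -subr_eq0 phiE gx psix /= !subrr mulr0 addr0.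
move=> [Px /= phix]; have [w [w0 w1 exw]] := Px.
have Tw i : w i != 0 -> T (vt i).
  move=> wi; apply: contrapT => /outside_lt; rewrite lt_neqAle => /andP[/eqP + _]; apply.
  by apply: (dotp_comb_eq_active w0 w1 (fun j _ => vt_le j) _ wi); rewrite -exw.
have Tx : T x.
  rewrite eT; split => //; rewrite exw; apply: dotp_comb_eq => // i /Tw.
  by rewrite eT => -[].
split => //; move/eqP: phix; rewrite -subr_eq0 phiE.
by move: Tx; rewrite {1}eT => -[_ ->]; rewrite subrr mulr0 add0r subr_eq0 => /eqP.
Qed.

End Faces.

Section Slices.
Variables (R : realType) (d : nat).
Local Notation pt := 'rV[R]_d.

Lemma segment_hyperplane (C : set pt) (a : pt) b x y : is_convex C -> C x -> C y ->
  dotp a y < b -> b < dotp a x ->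
  exists t, [/\ 0 < t, t < 1, C (t *: x + (1 - t) *: y) & dotp a (t *: x + (1 - t) *: y) = b].
Proof.
move=> cvxC Cx Cy yb bx; set D := dotp a x - dotp a y.
have D0 : 0 < D by rewrite /D subr_gt0; exact: lt_trans yb bx.
exists ((b - dotp a y) / D); split.
- by rewrite divr_gt0 // subr_gt0.
- by rewrite ltr_pdivrMr // mul1r /D ltrD2r.
- apply: cvxC => //; first by rewrite ltW // divr_gt0 // subr_gt0.
  by rewrite ler_pdivrMr // mul1r /D lerD2r ltW.
- by rewrite dotpDr !dotpZr; move: D0; rewrite /D => D0; field; rewrite lt0r_neq0.
Qed.

Lemma aff_rank_slice_leq (C : set pt) (a : pt) b qp qm : is_convex C -> C qp -> C qm ->
  b < dotp a qp -> dotp a qm < b ->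
  (aff_rank C <= (aff_rank (C `&` hyperplane a b)).+1)%N.
Proof.
move=> cvxC Cp Cm bp mb; have [p [Sp fp]] := aff_rank_basis (C `&` hyperplane a b).
set M := homog_mx (rcons_pt p qp).
have spanH x : C x -> dotp a x = b -> (homog x <= M)%MS.
  by move=> Cx ax; apply: submx_trans (homog_mx_rconsS _ _); apply: (aff_rank_span Sp fp).
have spanp : (homog qp <= M)%MS by apply: homog_rcons_sub.
have span_through x z t : (homog z <= M)%MS -> C (t *: z + (1 - t) *: x) ->
    dotp a (t *: z + (1 - t) *: x) = b -> t < 1 -> (homog x <= M)%MS.
  move=> zM Cxz axz t1; apply: (submx_comb (spanH _ Cxz axz) zM (al := 1 - t) (be := t)).
    by rewrite homog_comb addrC.
  by rewrite subr_eq0 eq_sym lt_eqF.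
have spanm : (homog qm <= M)%MS.
  by have [t [_ t1 Cz az]] := segment_hyperplane cvxC Cp Cm mb bp; exact: span_through Cz az t1.
rewrite -addn1; apply: aff_rank_leq_span => x Cx.
have [ax|ax|ax] := ltgtP (dotp a x) b; last exact: spanH.
  by have [t [_ t1 Cz az]] := segment_hyperplane cvxC Cp Cx ax bp; exact: span_through Cz az t1.
have [t [t0 _ Cz az]] := segment_hyperplane cvxC Cx Cm mb ax.
by apply: (submx_comb (spanH _ Cz az) spanm (al := t) (be := 1 - t)); rewrite ?homog_comb ?gt_eqF.
Qed.

End Slices.

Section FaceLattice.
Variables (R : realType) (d : nat).
Local Notation pt := 'rV[R]_d.
Variable V : seq pt.
Local Notation n := (size V).
Local Notation vt i := (V`_(val i)).
Local Notation P := (conv V).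

Lemma ineq_face_shrink F x : ineq_face P F -> F x -> (1 < aff_rank F)%N ->
  exists G, [/\ ineq_face P G, G `<=` F, (exists z, G z) & (aff_rank G < aff_rank F)%N].
Proof.
move=> gF Fx F1; have [y [Fy yx]] := aff_rank_gt1_other Fx F1.
set c := x - y; have [i0 Fi0] := ineq_face_vt gF Fx.
have [i [/asboolP Fi imax]] := @exists_argmax _ _ (fun j : 'I_n => `[< F (vt j) >])
  (fun j => dotp c (vt j)) (ex_intro _ i0 (asboolT Fi0)).
have c_le : forall z, F z -> dotp c z <= dotp c (vt i).
  by apply: ineq_face_le gF _ => j Fj; apply: imax; exact/asboolP.
exists (F `&` [set z | dotp c z = dotp c (vt i)]); split.
- exact: ineq_face_trans.
- by move=> z [].
- by exists (vt i).
apply: (aff_rank_ltr_hyperplane (c := c) (beta := dotp c (vt i)) _ _ Fy) => [z []|z []|] //.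
rewrite lt_eqF //; apply: lt_le_trans (c_le _ Fx); rewrite -subr_gt0 -dotpBr.
by apply: dotpp_gt0; rewrite /c subr_eq0 eq_sym.
Qed.

Lemma ineq_face_vertex F : ineq_face P F -> (exists x, F x) ->
  exists w, [/\ ineq_face P w, aff_rank w = 1%N & w `<=` F].
Proof.
have [m] := ubnP (aff_rank F); elim: m F => // m IH F Fm gF [x Fx].
have F0 := aff_rank_gt0 Fx.
have [F1|F1] := leqP (aff_rank F) 1; first by exists F; split => //; apply/eqP; rewrite eqn_leq F1.
have [G [gG GF G0 GFlt]] := ineq_face_shrink gF Fx F1.
have [w [gw w1 wG]] := IH G (leq_trans GFlt Fm) gG G0.
by exists w; split => // z /wG /GF.
Qed.

End FaceLattice.

Section Forms.
Variables (R : realType) (d : nat).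
Local Notation pt := 'rV[R]_d.

(* [h] and [eta] are read off a column of the cokernel of the homogenized
   basis of [S] extended by [y]. *)
Lemma exists_form_through (S T : set pt) y : ((aff_rank S).+1 < aff_rank T)%N ->
  exists h eta t, [/\ forall x, S x -> dotp h x = eta, dotp h y = eta, T t & eta < dotp h t].
Proof.
move=> ST; have [pS [Sp freeS]] := aff_rank_basis S; have [pT [Tp freeT]] := aff_rank_basis T.
set B := homog_mx (rcons_pt pS y).
have /negP : ~ (homog_mx pT <= B)%MS.
  by move/(row_free_leq freeT); rewrite addn1 leqNgt ST.
rewrite submxE matrix_eq0 negb_forall => /existsP[i]; rewrite negb_forall => /existsP[j ij0].
set w : 'cV[R]_(d + 1) := cokermx B *m delta_mx j 0.
have valE x : (homog x *m w) 0 0 = dotp (usubmx w)^T x + dsubmx w 0 0.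
  by rewrite homog_mulmx mxE /= mulr1n.
have B_ker x : (homog x <= B)%MS -> dotp (usubmx w)^T x = - dsubmx w 0 0.
  move=> xB; apply/eqP; rewrite -subr_eq0 opprK -valE.
  by rewrite (submx_mulmx0 xB) ?mxE // /w mulmxA mulmx_coker mul0mx.
have Sw x : S x -> dotp (usubmx w)^T x = - dsubmx w 0 0.
  by move=> Sx; apply/B_ker/(submx_trans (aff_rank_span Sp freeS Sx))/homog_mx_rconsS.
have yw := B_ker _ (homog_rcons_sub pS y).
have tw : dotp (usubmx w)^T (pT i) != - dsubmx w 0 0.
  by rewrite -subr_eq0 opprK -valE -row_homog_mx -row_mul mxE /w mulmxA -colE mxE.
have [lt|ge] := ltP (- dsubmx w 0 0) (dotp (usubmx w)^T (pT i)).
  by exists (usubmx w)^T, (- dsubmx w 0 0), (pT i).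
exists (- (usubmx w)^T), (dsubmx w 0 0), (pT i); split => //.
- by move=> x /Sw; rewrite dotpNl => ->; rewrite opprK.
- by rewrite dotpNl yw opprK.
- by rewrite dotpNl ltrNr lt_neqAle tw.
Qed.

End Forms.

Section FaceChain.
Variables (R : realType) (d : nat).
Local Notation pt := 'rV[R]_d.
Variable V : seq pt.
Local Notation n := (size V).
Local Notation vt i := (V`_(val i)).
Local Notation P := (conv V).

Section Rotation.
Variables (g h : pt) (gam eta : R) (T : set pt).
Hypotheses (gP : forall x, P x -> dotp g x <= gam) (gT : ineq_face P T).
Hypothesis h_eq : forall i : 'I_n, T (vt i) -> dotp g (vt i) = gam -> dotp h (vt i) = eta.
Hypothesis h_gt : exists2 t, T t & eta < dotp h t.

(* Rotate the hyperplane [g = gam] about [g = gam, h = eta] until it first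
   touches a vertex of [T] with [h > eta]; [ts] is the smallest rotation
   parameter over these vertices. *)
Lemma exists_rotation : exists ts (i : 'I_n), [/\ 0 < ts, T (vt i), dotp g (vt i) < gam,
  dotp (g + ts *: h) (vt i) = gam + ts * eta &
  forall j : 'I_n, T (vt j) -> dotp (g + ts *: h) (vt j) <= gam + ts * eta].
Proof.
have [i0 [Ti0 hi0]] : exists i : 'I_n, T (vt i) /\ eta < dotp h (vt i).
  have [t Tt ht] := h_gt; have [w [w0 w1 ex]] := ineq_face_sub gT Tt.
  apply: contrapT => novt; move: ht; rewrite ex ltNge (dotp_comb_le w0 w1) // => i wi.
  rewrite leNgt; apply/negP => hi; apply: novt; exists i; split => //.
  exact: ineq_face_active gT Tt w0 w1 ex i wi.
have g_lt (j : 'I_n) : T (vt j) -> eta < dotp h (vt j) -> dotp g (vt j) < gam.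
  move=> Tj hj; rewrite lt_neqAle gP ?andbT; last exact: conv_vt.
  by apply: contraTneq hj => /(h_eq Tj) ->; rewrite ltxx.
pose rho (i : 'I_n) := (gam - dotp g (vt i)) / (dotp h (vt i) - eta).
have [i [/asboolP [Ti hi] imin]] := @exists_argmin _ _
   (fun i : 'I_n => `[< T (vt i) /\ eta < dotp h (vt i) >]) rho
   (ex_intro _ i0 (asboolT (conj Ti0 hi0))).
exists (rho i), i; split => //.
- by rewrite divr_gt0 // subr_gt0 ?g_lt.
- exact: g_lt.
- by rewrite dotpDl dotpZl /rho; field; rewrite subr_eq0 gt_eqF.
move=> j Tj; rewrite dotpDl dotpZl.
have [hj|hj] := ltP eta (dotp h (vt j)).
  have : rho i * (dotp h (vt j) - eta) <= gam - dotp g (vt j).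
    by rewrite -ler_pdivlMr ?subr_gt0 //; exact: imin j (asboolT (conj Tj hj)).
  by rewrite mulrBr; lra.
have : rho i * (dotp h (vt j) - eta) <= 0.
  by rewrite mulr_ge0_le0 ?subr_le0 // ltW // divr_gt0 // subr_gt0 ?g_lt.
have := gP (conv_vt j); rewrite mulrBr; lra.
Qed.

End Rotation.

Lemma ineq_face_between G T g gam y h eta t :
  (forall x, P x -> dotp g x <= gam) -> G = P `&` [set x | dotp g x = gam] ->
  ineq_face P T -> G `<=` T -> T y -> dotp g y < gam ->
  (forall x, G x -> dotp h x = eta) -> dotp h y = eta -> T t -> eta < dotp h t ->
  exists F, [/\ ineq_face P F, G `<=` F, F `<=` T,
    (aff_rank G < aff_rank F)%N & (aff_rank F < aff_rank T)%N].
Proof.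
move=> gP eG gT GT Ty gy hG hy Tt ht.
have h_eq (i : 'I_n) : T (vt i) -> dotp g (vt i) = gam -> dotp h (vt i) = eta.
  by move=> _ gi; apply: hG; rewrite eG; split => //; exact: conv_vt.
have [ts [i [ts0 Ti gi phii phi_le]]] := exists_rotation gP gT h_eq (ex_intro2 _ _ t Tt ht).
set F := T `&` [set x | dotp (g + ts *: h) x = gam + ts * eta].
have GF : G `<=` F.
  move=> x Gx; split; first exact: GT.
  by rewrite /= dotpDl dotpZl hG //; move: Gx; rewrite eG => -[_ ->].
exists F; split => //; first exact/ineq_face_trans/(ineq_face_le gT phi_le).
- by move=> x [].
- apply: (aff_rank_ltr_hyperplane (c := g) (beta := gam) GF _ (_ : F (vt i))).
  + by move=> x; rewrite eG => -[].
  + by split.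
  + by rewrite lt_eqF.
- apply: (aff_rank_ltr_hyperplane (c := g + ts *: h) (beta := gam + ts * eta) _ _ Ty).
  + by move=> x [].
  + by move=> x [].
  + by rewrite dotpDl dotpZl hy lt_eqF // ltrD2r.
Qed.

Lemma ineq_face_succ G T : ineq_face P G -> ineq_face P T -> G `<=` T ->
  (aff_rank G < aff_rank T)%N ->
  exists F, [/\ ineq_face P F, G `<=` F, F `<=` T & aff_rank F = (aff_rank G).+1].
Proof.
move=> [g [gam [gP eG]]]; have [m] := ubnP (aff_rank T); elim: m T => // m IH T Tm gT GT GTlt.
have [TG|GT1] := eqVneq (aff_rank T) (aff_rank G).+1; first by exists T; split.
have {GTlt GT1}GTlt : ((aff_rank G).+1 < aff_rank T)%N by rewrite ltn_neqAle eq_sym GT1.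
have [y [Ty Gy]] : exists y, T y /\ ~ G y.
  apply: contrapT => TG; move: GTlt; rewrite ltnNge ltnW // ltnS aff_rankS // => z Tz.
  by apply: contrapT => Gz; apply: TG; exists z.
have gy : dotp g y < gam.
  rewrite lt_neqAle gP ?andbT; last exact: ineq_face_sub gT _ Ty.
  by apply: contra_notN Gy => /eqP gy; rewrite eG; split => //; exact: ineq_face_sub gT _ Ty.
have [h [eta [t [hG hy Tt ht]]]] := exists_form_through y GTlt.
have [F [gF GF FT GFlt FTlt]] := ineq_face_between gP eG gT GT Ty gy hG hy Tt ht.
have [F' [gF' GF' F'F F'G]] := IH F (leq_trans FTlt Tm) gF GF GFlt.
by exists F'; split => // z /F'F /FT.
Qed.

Lemma ineq_face_extend G k :
  ineq_face P G -> (aff_rank G <= k <= aff_rank P)%N ->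
  exists F, [/\ ineq_face P F, G `<=` F & aff_rank F = k].
Proof.
move=> gG; elim: k => [|k IH] /andP[Gk kP].
  by exists G; split => //; apply/eqP; rewrite -leqn0.
have [Gk1|] := eqVneq (aff_rank G) k.+1; first by exists G; split.
move=> GNk; have {GNk}Gk : (aff_rank G <= k)%N by rewrite -ltnS ltn_neqAle GNk.
have [F0 [gF0 GF0 F0k]] := IH (introT andP (conj Gk (ltnW kP))).
have F0P : (aff_rank F0 < aff_rank P)%N by rewrite F0k.
have [F [gF F0F _ Fk]] := ineq_face_succ gF0 (ineq_face_refl _) (ineq_face_sub gF0) F0P.
exists F; split => //; last by rewrite Fk F0k.
by move=> x /GF0 /F0F.
Qed.

End FaceChain.

Lemma ineq_face_cut (R : realType) (d : nat) (P F : set 'rV[R]_d) a b :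
  ineq_face P F -> ineq_face (P `&` halfspace a b) (F `&` hyperplane a b).
Proof.
move=> [g [gam [gP ->]]]; exists (g - a), (gam - b); split.
  by move=> x [Px ax]; rewrite dotpBl lerB // gP.
apply/seteqP; split => [x [[Px gx] ax]|x [[Px ax] /=]].
  by split; [split => //; rewrite /halfspace /= ax | rewrite /= dotpBl gx ax].
rewrite dotpBl => e; have := gP x Px; rewrite /halfspace /= in ax => gx.
have ax_eq : dotp a x = b by lra.
by split; [split => //=; lra | exact: ax_eq].
Qed.

Section Cut.
Variables (R : realType) (d : nat).
Local Notation pt := 'rV[R]_d.
Variable V : seq pt.
Local Notation n := (size V).
Local Notation vt i := (V`_(val i)).
Local Notation P := (conv V).
Variables (a : pt) (b : R).

Lemma cut_vertex_pair c beta (i j : 'I_n) :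
  (forall x, (P `&` halfspace a b) x -> dotp c x <= beta) ->
  dotp a (vt i) < b -> b < dotp a (vt j) ->
  (dotp c (vt i) - beta) / (b - dotp a (vt i)) * (dotp a (vt j) - b) <= beta - dotp c (vt j).
Proof.
move=> cP' ai aj.
have [t [t0 t1 Pz az]] := segment_hyperplane (@conv_convex _ _ V) (conv_vt j) (conv_vt i) ai aj.
have cz : dotp c (t *: vt j + (1 - t) *: vt i) <= beta.
  by apply: cP'; split => //; rewrite /halfspace /= az.
move: az cz; rewrite !dotpDr !dotpZr.
move: (dotp c (vt i)) (dotp c (vt j)) (dotp a (vt i)) (dotp a (vt j)) ai aj.
move=> Xi Yj Ai Aj ai aj az cz; have p0 : 0 < b - Ai by rewrite subr_gt0.
rewrite mulrAC ler_pdivrMr //.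
have tq : t * (Aj - b) = (1 - t) * (b - Ai) by lra.
have : (1 - t) * (Xi - beta) <= t * (beta - Yj).
  rewrite -subr_le0; suff -> : (1 - t) * (Xi - beta) - t * (beta - Yj) = t * Yj + (1 - t) * Xi - beta.
    by rewrite subr_le0.
  by ring.
have q0 : 0 < Aj - b by rewrite subr_gt0.
move/(ler_wpM2r (ltW q0)).
rewrite [t * _ * _]mulrAC tq -mulrA -[X in _ <= X]mulrA ler_pM2l ?subr_gt0 //.
by rewrite [X in _ <= X -> _]mulrC.
Qed.

(* Farkas-type lifting; [l] is the largest ratio [(c v - beta) / (b - a v)]
   over the vertices [v] below [H], the pairwise bound coming from
   [cut_vertex_pair]. *)
Lemma cut_ineq_lift c beta :
  (forall x, (P `&` halfspace a b) x -> dotp c x <= beta) ->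
  exists2 l, 0 <= l & forall x, P x -> dotp (c + l *: a) x <= beta + l * b.
Proof.
move=> cP'.
have cH (j : 'I_n) : b <= dotp a (vt j) -> dotp c (vt j) <= beta.
  by move=> aj; apply: cP'; split => //; exact: conv_vt.
pose r (i : 'I_n) := (dotp c (vt i) - beta) / (b - dotp a (vt i)).
have [[i [/asboolP ai imax]]|above] : (exists i : 'I_n, `[< dotp a (vt i) < b >] /\
    forall j : 'I_n, `[< dotp a (vt j) < b >] -> r j <= r i) \/
    (forall i : 'I_n, b <= dotp a (vt i)).
- have [[i ai]|] := pselect (exists i : 'I_n, dotp a (vt i) < b).
    left; apply: (@exists_argmax _ _ (fun i : 'I_n => `[< dotp a (vt i) < b >]) r).
    by exists i; exact/asboolP.
  by move=> none; right => i; rewrite leNgt; apply/negP => ai; apply: none; exists i.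
- exists (Num.max (r i) 0); first by rewrite le_max lexx orbT.
  move=> x [w [w0 w1 ->]]; apply: dotp_comb_le => // j _.
  rewrite dotpDl dotpZl -subr_le0.
  have -> : dotp c (vt j) + Num.max (r i) 0 * dotp a (vt j) - (beta + Num.max (r i) 0 * b)
     = (dotp c (vt j) - beta) - Num.max (r i) 0 * (b - dotp a (vt j)) by ring.
  have [aj|aj|aj] := ltgtP (dotp a (vt j)) b.
  + have pj : 0 < b - dotp a (vt j) by rewrite subr_gt0.
    have := imax j (asboolT aj); rewrite ler_pdivrMr // => rj.
    have : r i * (b - dotp a (vt j)) <= Num.max (r i) 0 * (b - dotp a (vt j)).
      by rewrite ler_pM2r // le_max lexx.
    by move: (r i * _) (Num.max _ _ * _) rj => X Y; lra.
  + have := cH j (ltW aj); have := cut_vertex_pair cP' ai aj.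
    rewrite -/(r i) -[b - _]opprB mulrN opprK.
    have [ri0|ri0] := leP (r i) 0; first by rewrite mul0r addr0 subr_le0.
    by move: (r i * _) => X; lra.
  + by rewrite aj subrr mulr0 subr0 subr_le0 cH // aj.
exists 0 => // x [w [w0 w1 ->]]; apply: dotp_comb_le => // j _.
by rewrite scale0r addr0 mul0r addr0 cH.
Qed.

Lemma cut_face_lift G' : ineq_face (P `&` halfspace a b) G' ->
  exists2 G, ineq_face P G & G `&` hyperplane a b = G' `&` hyperplane a b.
Proof.
move=> [c [beta [cP' ->]]]; have [l l0 lP] := cut_ineq_lift cP'.
exists (P `&` [set x | dotp (c + l *: a) x = beta + l * b]).
  by exists (c + l *: a), (beta + l * b).
apply/seteqP; split => x [[Px /=]]; rewrite dotpDl dotpZl => cx ax; rewrite ax in cx *.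
  by split => //; split; [split => //; rewrite /halfspace /= ax | exact: addIr cx].
by case: Px => Px _; do !split => //; rewrite cx.
Qed.

End Cut.

Section NewFaces.
Variables (R : realType) (d : nat).
Local Notation pt := 'rV[R]_d.
Variable V : seq pt.
Local Notation P := (conv V).
Variables (a : pt) (b : R).
Hypothesis no_vertex : forall w, kface P 0 w -> w `&` hyperplane a b = set0.

Lemma ineq_face_not_sub_hyperplane F :
  ineq_face P F -> (exists x, F x) -> ~ F `<=` hyperplane a b.
Proof.
move=> gF F0 FH; have [w [gw w1 wF]] := ineq_face_vertex gF F0.
have [x wx] := aff_rank_gt0_inhabited (eq_leq (esym w1)).
have := no_vertex (conj (proj2 (faceP _ _) gw) (proj2 (affdimE _ _) w1)).
by move/seteqP => [/(_ x) + _]; apply; split => //; exact/FH/wF.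
Qed.

Lemma ineq_face_straddle F : ineq_face P F -> (exists x, F x /\ dotp a x = b) ->
  (exists y, F y /\ dotp a y < b) /\ (exists z, F z /\ b < dotp a z).
Proof.
move=> gF [x [Fx ax]]; split; apply: contrapT => side.
  have aF y : F y -> dotp (- a) y <= - b.
    by move=> Fy; rewrite dotpNl lerN2 leNgt; apply/negP => ay; apply: side; exists y.
  apply: (ineq_face_not_sub_hyperplane (ineq_face_trans gF aF)); first by exists x; rewrite /= dotpNl ax.
  by move=> y [_ /eqP]; rewrite /= dotpNl eqr_opp => /eqP.
have aF y : F y -> dotp a y <= b.
  by move=> Fy; rewrite leNgt; apply/negP => ay; apply: side; exists y.
apply: (ineq_face_not_sub_hyperplane (ineq_face_trans gF aF)); first by exists x.
by move=> y [].
Qed.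

Lemma aff_rank_slice F : ineq_face P F -> (exists x, F x /\ dotp a x = b) ->
  aff_rank F = (aff_rank (F `&` hyperplane a b)).+1.
Proof.
move=> gF FH; have [[qm [Fm am]] [qp [Fp ap]]] := ineq_face_straddle gF FH.
apply/eqP; rewrite eqn_leq (aff_rank_slice_leq (ineq_face_convex (@conv_convex _ _ V) gF) Fp Fm ap am).
by apply: (aff_rank_ltr_hyperplane (c := a) (beta := b) _ _ Fp) => [x []|x []|]; rewrite // gt_eqF.
Qed.

(* A face meeting [H] lies in every face containing its trace on [H]: otherwise
   cutting it by that face would lose a dimension while keeping the trace. *)
Lemma ineq_face_sub_of_slice u G : ineq_face P u -> ineq_face P G ->
  (exists x, u x /\ dotp a x = b) -> u `&` hyperplane a b `<=` G -> u `<=` G.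
Proof.
move=> gu gG uH uHG; case: (gG) => g [gam [gP eG]].
have g_le x : u x -> dotp g x <= gam by move=> /(ineq_face_sub gu) /gP.
have G_eq x : G x -> dotp g x = gam by rewrite eG => -[].
set W := u `&` [set x | dotp g x = gam].
have WH : W `&` hyperplane a b = u `&` hyperplane a b.
  apply/seteqP; split => x; first by case=> -[].
  by move=> [ux hx]; split => //; split => //; apply/G_eq/uHG.
have WH0 : exists x, W x /\ dotp a x = b.
  by have [x [ux ax]] := uH; exists x; split => //; split => //; apply/G_eq/uHG.
move=> y uy; rewrite eG; split; first exact: ineq_face_sub gu _ uy.
apply: contrapT => /eqP gy.
have := aff_rank_ltr_hyperplane (S := W) (fun x (Wx : W x) => proj1 Wx) (fun x (Wx : W x) => proj2 Wx) uy gy.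
by rewrite (aff_rank_slice (ineq_face_trans gu g_le) WH0) (aff_rank_slice gu uH) WH ltnn.
Qed.

Lemma new_faces_common_parent k u v G' : (k.+3 <= aff_rank P)%N ->
  ineq_face P u -> (exists x, u x /\ dotp a x = b) ->
  ineq_face P v -> (exists x, v x /\ dotp a x = b) ->
  ineq_face (P `&` halfspace a b) G' -> aff_rank G' = k.+2 ->
  hyperplane a b `&` u `<=` G' -> hyperplane a b `&` v `<=` G' ->
  exists F, [/\ ineq_face P F, aff_rank F = k.+3, u `<=` F & v `<=` F].
Proof.
move=> kP gu uH gv vH gG' G'k uG' vG'.
have [G gG GH] := cut_face_lift gG'.
have sliceG w : hyperplane a b `&` w `<=` G' -> w `&` hyperplane a b `<=` G.
  move=> wG' x [wx hx]; suff : (G `&` hyperplane a b) x by case.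
  by rewrite GH; split => //; apply: wG'.
have uG := ineq_face_sub_of_slice gu gG uH (sliceG _ uG').
have vG := ineq_face_sub_of_slice gv gG vH (sliceG _ vG').
have Gk : (aff_rank G <= k.+3)%N.
  have [x [ux ax]] := uH.
  rewrite (aff_rank_slice gG (ex_intro _ x (conj (uG x ux) ax))) GH ltnS -G'k.
  by apply: aff_rankS => y [].
have [F [gF GF Fk]] := ineq_face_extend gG (introT andP (conj Gk kP)).
by exists F; split => // x => [/uG|/vG] /GF.
Qed.

End NewFaces.

Unset Implicit Arguments.

Theorem mainTheorem3 (R : realType) (d : nat) (P : set 'rV[R]_d)
    (a : 'rV[R]_d) (b : R) (k : nat) (u' v' u v : set 'rV[R]_d) :
  simple_polytope P ->
  a != 0 ->
  (forall w, kface P 0 w -> w `&` hyperplane a b = set0) ->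
  (exists x, interior P x /\ hyperplane a b x) ->
  (k + 2 <= d)%N ->
  kface (P `&` halfspace a b) k u' -> u' `<=` hyperplane a b ->
  kface (P `&` halfspace a b) k v' -> v' `<=` hyperplane a b ->
  kface P k.+1 u -> u' = hyperplane a b `&` u ->
  kface P k.+1 v -> v' = hyperplane a b `&` v ->
  (exists F', kface (P `&` halfspace a b) k.+1 F' /\ u' `<=` F' /\ v' `<=` F') <->
  (exists F, kface P k.+2 F /\ u `<=` F /\ v `<=` F).
Proof.
move=> [[[V ->] /affdimE dP] _] _ no_vertex _ k2.
move=> [_ /affdimE u'k] _ [_ /affdimE v'k] _ [/faceP gu _] eu [/faceP gv _] ev.
have meets w w' : w' = hyperplane a b `&` w -> aff_rank w' = k.+1 ->
    exists x, w x /\ dotp a x = b.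
  move=> -> wk; have : (0 < aff_rank (hyperplane a b `&` w))%N by rewrite wk.
  by move=> /aff_rank_gt0_inhabited [x [hx wx]]; exists x.
have uH := meets _ _ eu u'k; have vH := meets _ _ ev v'k.
split => [[G' [[/faceP gG' /affdimE G'k] [uG' vG']]]|[F [[/faceP gF /affdimE Fk] [uF vF]]]].
  have kP : (k.+3 <= aff_rank (conv V))%N by rewrite dP ltnS -addn2.
  rewrite eu ev in uG' vG'.
  have [F [gF Fk uF vF]] := new_faces_common_parent no_vertex kP gu uH gv vH gG' G'k uG' vG'.
  by exists F; split => //; split; [exact/faceP | exact/affdimE].
have [x [ux ax]] := uH.
exists (F `&` hyperplane a b); split; last first.
  by rewrite eu ev; split => y [hy wy]; split => //; [apply: uF | apply: vF].
split; first exact/faceP/ineq_face_cut.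
by apply/affdimE; move: Fk; rewrite (aff_rank_slice no_vertex gF (ex_intro _ x (conj (uF x ux) ax))) => -[].
Qed.
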